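(* Let $\gamma_1,\gamma_2,\gamma_3\in\mathbb{R}$ with $\gamma_1,\gamma_2\ge 0$, and let $\mathcal{L}(X)=\frac12\sum_{k=1}^3\gamma_k(\sigma_kX\sigma_k-X)$ on $\mathcal{M}_2$. If $e^{t\mathcal{L}}$ is a unital Schwarz map for every $t\ge 0$, then $\gamma_1+\gamma_2+4\gamma_3\ge 0$. Equivalently, in terms of $\Gamma_1=\gamma_2+\gamma_3$, $\Gamma_2=\gamma_3+\gamma_1$, $\Gamma_3=\gamma_1+\gamma_2$, one has $\Gamma_1+\Gamma_2\ge\frac12\Gamma_3$.
   Context: $\sigma_1,\sigma_2,\sigma_3$ are the Pauli matrices. A unital Schwarz map on $\mathcal{M}_n$ is a linear map $\Phi$ with $\Phi(\mathbb{1})=\mathbb{1}$ and $\Phi(X^\dagger X)\ge\Phi(X)^\dagger\Phi(X)$ for all $X\in\mathcal{M}_n$. Note that $\mathcal{L}$ is self-dual with respect to the Hilbert–Schmidt inner product, i.e. $\mathcal{L}^\ddagger=\mathcal{L}$. *)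

From HB Require Import structures.
From mathcomp Require Import all_boot all_order all_algebra.
From mathcomp Require Import all_classical all_reals all_analysis.
From mathcomp Require Import complex.
Set Implicit Arguments. Unset Strict Implicit. Unset Printing Implicit Defensive.
Import Order.TTheory GRing.Theory Num.Theory.
Import numFieldNormedType.Exports.
Local Open Scope ring_scope.
Local Open Scope complex_scope.

Section Defs.
Variable R : realType.
Local Notation C := (R[i]).
Local Notation Mx := ('M[C]_2).

Definition adj (m n : nat) (A : 'M[C]_(m, n)) : 'M[C]_(n, m) := map_mx (@conjc R) A^T.

(* Positive semidefinite: v^dagger A v >= 0 for all v (in the order of C,
   i.e. real and nonnegative; over C this includes hermiticity). *)
Definition psd (A : Mx) : Prop := forall v : 'cV[C]_2, 0 <= (adj v *m A *m v) 0 0.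

Definition pauli1 : Mx := \matrix_(i < 2, j < 2) (if i != j :> nat then 1 else 0).
Definition pauli2 : Mx :=
  \matrix_(i < 2, j < 2) (if (i == 0 :> nat) && (j == 1 :> nat) then - 'i
                          else if (i == 1 :> nat) && (j == 0 :> nat) then 'i else 0).
Definition pauli3 : Mx :=
  \matrix_(i < 2, j < 2) (if i == j :> nat then (if i == 0 :> nat then 1 else -1) else 0).

Definition Lgen (g1 g2 g3 : R) (X : Mx) : Mx :=
  (2^-1 : R)%:C *: ( (g1%:C) *: (pauli1 *m X *m pauli1 - X)
                   + (g2%:C) *: (pauli2 *m X *m pauli2 - X)
                   + (g3%:C) *: (pauli3 *m X *m pauli3 - X)).

Definition expL_partial (g1 g2 g3 t : R) (X : Mx) (N : nat) : Mx :=
  \sum_(n < N) ((t ^+ n / (n`!)%:R)%:C *: iter n (Lgen g1 g2 g3) X).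

Definition expL (g1 g2 g3 t : R) (X : Mx) : Mx :=
  \matrix_(i < 2, j < 2)
    Complex (limn (fun N => @complex.Re R (expL_partial g1 g2 g3 t X N i j)))
            (limn (fun N => @complex.Im R (expL_partial g1 g2 g3 t X N i j))).

Definition unital_schwarz (Phi : Mx -> Mx) : Prop :=
  (forall (a : C) (X Y : Mx), Phi (a *: X + Y) = a *: Phi X + Phi Y) /\
  Phi 1%:M = 1%:M /\
  (forall X : Mx, psd (Phi (adj X *m X) - adj (Phi X) *m Phi X)).

End Defs.

(* The Pauli matrices are eigenvectors of L: L sigma_k = -Gamma_k sigma_k, hence
   e^{tL} sigma_k = e^{-t Gamma_k} sigma_k.  The Schwarz inequality for the raising
   operator X = (sigma_1 + i sigma_2)/2, for which X^dagger X = (1 - sigma_3)/2, read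
   off at the diagonal entry (1,1), gives
     (e^{-t Gamma_1} + e^{-t Gamma_2})^2 <= 2 (1 + e^{-t Gamma_3})   for t >= 0,
   with equality at t = 0.  Comparing right derivatives at t = 0 yields
   2 (Gamma_1 + Gamma_2) >= Gamma_3, i.e. gamma_1 + gamma_2 + 4 gamma_3 >= 0. *)

From HB Require Import structures.
From mathcomp Require Import all_boot all_order all_algebra.
From mathcomp Require Import all_classical all_reals all_analysis.
From mathcomp Require Import complex.
From mathcomp.algebra_tactics Require Import ring lra.
Set Implicit Arguments. Unset Strict Implicit. Unset Printing Implicit Defensive.
Import Order.TTheory GRing.Theory Num.Theory.
Import numFieldNormedType.Exports.
Local Open Scope classical_set_scope.
Local Open Scope ring_scope.
Local Open Scope complex_scope.

Lemma derive_ge0_at_right_min (R : realFieldType) (f : R -> R) (x : R) :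
  derivable f x 1 -> (\forall t \near x^'+, f x <= f t) -> 0 <= 'D_1 f x.
Proof.
move=> df fmin; rewrite ['D_1 f x]cvg_at_rightE; last exact: df.
apply: limr_ge.
  rewrite -(cvg_at_rightE (fun h : R => h^-1 *: ((f \o shift x) _ - f x))) //.
  apply: cvg_trans df; apply: cvg_app.
  move=> A [e egt0 Ae]; exists e => // h he hgt0; apply: Ae => //.
  exact/lt0r_neq0.
near=> h; apply: mulr_ge0.
  by rewrite invr_ge0; apply: ltW; near: h; exists 1 => /=.
rewrite subr_ge0 [_%:A]mulr1; near: h.
move: fmin => [e e0 fmin]; exists e => //= h he h0.
apply: fmin => /=; last by rewrite ltrDr.
by move: he; rewrite /ball /= sub0r normrN opprD addrC subrK normrN.
Unshelve. all: by end_near. Qed.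

Lemma slope_of_expR_sum_sq_bound (R : realType) (a b c : R) :
  (forall t, 0 < t -> (expR (a * t) + expR (b * t)) ^+ 2 <= 2 * (1 + expR (c * t))) ->
  2 * (a + b) <= c.
Proof.
move=> decay; pose e (k t : R) := expR (k * t).
pose f := 2 \*: (cst 1 + e c) - (e a + e b) ^+ 2.
have df : is_derive (0 : R) 1 f (2 * c - 4 * (a + b)).
  apply: is_derive_eq; rewrite /e !fctE !mulr0 expR0 !mul1r -![_ *: _]/(_ * _) /=.
  ring.
have f0 : f 0 = 0.
  by rewrite /f /e !fctE /= !mulr0 expR0 -[_ *: _]/(_ * _); ring.
suff : 0 <= 'D_1 f 0 by rewrite derive_val; lra.
apply: derive_ge0_at_right_min; first exact: ex_derive.
near=> t; rewrite f0 /f /e !fctE /= -[_ *: _]/(_ * _) subr_ge0.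
by apply: decay; near: t; exact: nbhs_right_gt.
Unshelve. all: by end_near. Qed.

Section PauliSemigroup.
Variable R : realType.
Local Notation C := R[i].
Local Notation Mx := 'M[C]_2.

Ltac mx2_entrywise :=
  apply/matrixP; let i := fresh "i" in let j := fresh "j" in intros i j;
  rewrite !mxE ?big_ord_recl ?big_ord0 ?mxE;
  case: i => [[|[|//]] ?]; case: j => [[|[|//]] ?] /=;
  apply/eqP; rewrite eq_complex /=; apply/andP; split; apply/eqP.

Lemma pauli1_sq : pauli1 R *m pauli1 R = 1%:M.
Proof. by mx2_entrywise; ring. Qed.
Lemma pauli2_sq : pauli2 R *m pauli2 R = 1%:M.
Proof. by mx2_entrywise; ring. Qed.
Lemma pauli3_sq : pauli3 R *m pauli3 R = 1%:M.
Proof. by mx2_entrywise; ring. Qed.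
Lemma pauli12_anticomm : pauli1 R *m pauli2 R + pauli2 R *m pauli1 R = 0.
Proof. by mx2_entrywise; ring. Qed.
Lemma pauli13_anticomm : pauli1 R *m pauli3 R + pauli3 R *m pauli1 R = 0.
Proof. by mx2_entrywise; ring. Qed.
Lemma pauli23_anticomm : pauli2 R *m pauli3 R + pauli3 R *m pauli2 R = 0.
Proof. by mx2_entrywise; ring. Qed.

Lemma mulmx_involution (A : Mx) : A *m A = 1%:M -> A *m A *m A = A.
Proof. by move=> AA; rewrite AA mul1mx. Qed.

Lemma mulmx_involution_anticomm (A B : Mx) :
  A *m A = 1%:M -> A *m B + B *m A = 0 -> A *m B *m A = - B.
Proof.
by move=> AA /eqP; rewrite addr_eq0 => /eqP->; rewrite mulNmx -mulmxA AA mulmx1.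
Qed.

Section Lindbladian.
Variables g1 g2 g3 : R.
Local Notation L := (Lgen g1 g2 g3).

Lemma Lgen_conj_eigen (X : Mx) (s1 s2 s3 : R) :
  pauli1 R *m X *m pauli1 R = s1%:C *: X ->
  pauli2 R *m X *m pauli2 R = s2%:C *: X ->
  pauli3 R *m X *m pauli3 R = s3%:C *: X ->
  L X = (2^-1 * (g1 * (s1 - 1) + g2 * (s2 - 1) + g3 * (s3 - 1)))%:C *: X.
Proof.
have subX (a : C) : a *: X - X = (a - 1) *: X by rewrite scalerBl scale1r.
move=> h1 h2 h3; rewrite /Lgen h1 h2 h3 !subX !scalerA -!scalerDl scalerA.
by congr (_ *: X); rewrite !(rmorphM, rmorphB, rmorphD, rmorph1).
Qed.

Lemma Lgen_pauli1 : L (pauli1 R) = (- (g2 + g3))%:C *: pauli1 R.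
Proof.
rewrite (@Lgen_conj_eigen _ 1 (-1) (-1)); first by congr (_%:C *: _); field.
- by rewrite rmorph1 scale1r mulmx_involution // pauli1_sq.
- by rewrite rmorphN1 scaleN1r mulmx_involution_anticomm ?pauli2_sq // addrC pauli12_anticomm.
- by rewrite rmorphN1 scaleN1r mulmx_involution_anticomm ?pauli3_sq // addrC pauli13_anticomm.
Qed.

Lemma Lgen_pauli2 : L (pauli2 R) = (- (g1 + g3))%:C *: pauli2 R.
Proof.
rewrite (@Lgen_conj_eigen _ (-1) 1 (-1)); first by congr (_%:C *: _); field.
- by rewrite rmorphN1 scaleN1r mulmx_involution_anticomm ?pauli1_sq // pauli12_anticomm.
- by rewrite rmorph1 scale1r mulmx_involution // pauli2_sq.
- by rewrite rmorphN1 scaleN1r mulmx_involution_anticomm ?pauli3_sq // addrC pauli23_anticomm.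
Qed.

Lemma Lgen_pauli3 : L (pauli3 R) = (- (g1 + g2))%:C *: pauli3 R.
Proof.
rewrite (@Lgen_conj_eigen _ (-1) (-1) 1); first by congr (_%:C *: _); field.
- by rewrite rmorphN1 scaleN1r mulmx_involution_anticomm ?pauli1_sq // pauli13_anticomm.
- by rewrite rmorphN1 scaleN1r mulmx_involution_anticomm ?pauli2_sq // pauli23_anticomm.
- by rewrite rmorph1 scale1r mulmx_involution // pauli3_sq.
Qed.

Lemma LgenZ (c : C) (X : Mx) : L (c *: X) = c *: L X.
Proof.
rewrite /Lgen -!scalemxAr -!scalemxAl -!scalerBr !scalerA ![_ * c]mulrC.
by rewrite -!scalerA -!scalerDr !scalerA mulrC -scalerA.
Qed.

Lemma expL_partial_eigen (t r : R) (X : Mx) : L X = r%:C *: X -> forall N,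
  expL_partial g1 g2 g3 t X N = (series (exp_coeff (r * t)) N)%:C *: X.
Proof.
move=> LX N; have iterLX n : iter n L X = (r ^+ n)%:C *: X.
  elim: n => [|n IH]; first by rewrite expr0 scale1r.
  by rewrite iterS IH LgenZ LX scalerA exprS -rmorphM mulrC.
rewrite /expL_partial /series /= big_mkord rmorph_sum scaler_suml.
apply: eq_bigr => n _; rewrite iterLX scalerA -rmorphM /exp_coeff /= exprMn.
by congr ((_)%:C *: X); ring.
Qed.

Lemma expL_eigen (t r : R) (X : Mx) : L X = r%:C *: X ->
  expL g1 g2 g3 t X = (expR (r * t))%:C *: X.
Proof.
move=> LX; have cvg_exp : series (exp_coeff (r * t)) @ \oo --> expR (r * t).
  exact: is_cvg_series_exp_coeff.
apply/matrixP => i j; rewrite !mxE.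
under eq_fun do rewrite (expL_partial_eigen _ LX) mxE.
under [in X in Complex _ X]eq_fun do rewrite (expL_partial_eigen _ LX) mxE.
case: (X i j) => a b /=.
rewrite (cvg_lim _ (cvgB (cvgMr_tmp (b := a) cvg_exp) (cvg_cst (0 * b)))) //.
by rewrite (cvg_lim _ (cvgD (cvgMr_tmp (b := b) cvg_exp) (cvg_cst (0 * a)))).
Qed.
End Lindbladian.

Lemma adj_delta_mx m n (i : 'I_m) (j : 'I_n) :
  adj (delta_mx i j : 'M[C]_(m, n)) = delta_mx j i.
Proof. by rewrite /adj trmx_delta map_delta_mx. Qed.

Lemma psd_diag (A : Mx) : psd A -> forall i, 0 <= A i i.
Proof. by move=> + i; move/(_ (delta_mx i 0)); rewrite adj_delta_mx -rowE -colE !mxE. Qed.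

Lemma delta01_pauli :
  delta_mx 0 1 = (2^-1 : R)%:C *: pauli1 R + ((2^-1 : R)%:C * 'i) *: pauli2 R.
Proof. by mx2_entrywise; field. Qed.

Lemma delta11_pauli : delta_mx 1 1 = (2^-1 : R)%:C *: (1%:M - pauli3 R).
Proof. by mx2_entrywise; field. Qed.

Lemma unital_schwarzZ (Phi : Mx -> Mx) : unital_schwarz Phi ->
  forall (a : C) (X : Mx), Phi (a *: X) = a *: Phi X.
Proof.
case=> lin _ a X; have Phi0 : Phi 0 = 0.
  by have := lin 1 0 0; rewrite !scale1r addr0 => /esym/(canRL (addrK _)); rewrite subrr.
by rewrite -[a *: X]addr0 lin Phi0 addr0.
Qed.

Lemma raising_schwarz_gap11 (l1 l2 l3 : R) :
  let Y := (2^-1 : R)%:C *: (l1%:C *: pauli1 R)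
           + ((2^-1 : R)%:C * 'i) *: (l2%:C *: pauli2 R) in
  ((2^-1 : R)%:C *: (1%:M - l3%:C *: pauli3 R) - adj Y *m Y) 1 1
  = ((2 * (1 + l3) - (l1 + l2) ^+ 2) / 4)%:C.
Proof.
rewrite /adj !mxE !big_ord_recl !big_ord0 /= !mxE /=.
by apply/eqP; rewrite eq_complex /=; apply/andP; split; apply/eqP; field.
Qed.

Lemma schwarz_pauli_eigen (Phi : Mx -> Mx) (l1 l2 l3 : R) : unital_schwarz Phi ->
  Phi (pauli1 R) = l1%:C *: pauli1 R -> Phi (pauli2 R) = l2%:C *: pauli2 R ->
  Phi (pauli3 R) = l3%:C *: pauli3 R -> (l1 + l2) ^+ 2 <= 2 * (1 + l3).
Proof.
move=> schw h1 h2 h3; have [lin [unit sch]] := schw.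
have PhiZ := unital_schwarzZ schw.
have PhiD X Y : Phi (X + Y) = Phi X + Phi Y by have := lin 1 X Y; rewrite !scale1r.
(* delta_mx 0 1 is the raising operator (sigma_1 + i sigma_2)/2. *)
have := psd_diag (sch (delta_mx 0 1)) 1.
rewrite adj_delta_mx mul_delta_mx delta11_pauli delta01_pauli.
rewrite PhiZ PhiD -scaleN1r PhiZ unit h3 PhiD !PhiZ h1 h2 scaleN1r raising_schwarz_gap11.
by rewrite lecE /= => /andP[_]; lra.
Qed.

End PauliSemigroup.

Theorem mainTheorem3 (R : realType) (g1 g2 g3 : R) :
  0 <= g1 -> 0 <= g2 ->
  (forall t : R, 0 <= t -> unital_schwarz (expL g1 g2 g3 t)) ->
  0 <= g1 + g2 + 4 * g3.
Proof.
move=> _ _ schw.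
suff : 2 * (- (g2 + g3) - (g1 + g3)) <= - (g1 + g2) by lra.
apply: slope_of_expR_sum_sq_bound => t t0.
apply: (schwarz_pauli_eigen (schw t (ltW t0))); apply: expL_eigen.
- exact: Lgen_pauli1.
- exact: Lgen_pauli2.
- exact: Lgen_pauli3.
Qed.
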